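(* Let $\mathcal{D}$ be a triangulated category with small coproducts and let $T_1,T_2$ be exceptional objects of $\mathcal{D}$ such that (A1) $\operatorname{Hom}_{\mathcal{D}}(T_1,T_2[k])=0$ for all $k\in\mathbb{Z}$ and (A2) $\operatorname{Hom}_{\mathcal{D}}(T_2,T_1[k])=0$ for all $k\in\mathbb{Z}\setminus\{0,1\}$. Let $\alpha:T_2\to T_1[1]$ be any morphism and $T_1\to T\xrightarrow{\gamma}T_2\xrightarrow{\alpha}T_1[1]$ a triangle. Then $T$ is exceptional if and only if the map $\operatorname{End}_{\mathcal{D}}(T_2)\oplus\operatorname{End}_{\mathcal{D}}(T_1)\to\operatorname{Hom}_{\mathcal{D}}(T_2,T_1[1])$, $(f,g)\mapsto\alpha\circ f+g[1]\circ\alpha$, is surjective.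
   Context: An object $T$ is exceptional if $\operatorname{Hom}_{\mathcal{D}}(T,T[k])=0$ for all nonzero integers $k$; $[1]$ is the shift functor. *)

From HB Require Import structures.
From mathcomp Require Import all_boot all_order all_algebra.
Set Implicit Arguments. Unset Strict Implicit. Unset Printing Implicit Defensive.
Import GRing.Theory.
Local Open Scope ring_scope.

Record TriCat := {
  Obj :> Type;
  Mor : Obj -> Obj -> zmodType;
  tcomp : forall X Y Z : Obj, Mor Y Z -> Mor X Y -> Mor X Z;
  idm : forall X : Obj, Mor X X;
  tcompA : forall X Y Z W (h : Mor Z W) (g : Mor Y Z) (f : Mor X Y),
      tcomp h (tcomp g f) = tcomp (tcomp h g) f;
  comp1m : forall X Y (f : Mor X Y), tcomp (idm Y) f = f;
  compm1 : forall X Y (f : Mor X Y), tcomp f (idm X) = f;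
  compDl : forall X Y Z (g g' : Mor Y Z) (f : Mor X Y),
      tcomp (g + g') f = tcomp g f + tcomp g' f;
  compDr : forall X Y Z (g : Mor Y Z) (f f' : Mor X Y),
      tcomp g (f + f') = tcomp g f + tcomp g f';
  zobj : Obj;
  zobj_from : forall X (f : Mor zobj X), f = 0;
  zobj_to : forall X (f : Mor X zobj), f = 0;
  biprod : forall X Y : Obj, exists P : Obj, exists (i1 : Mor X P) (i2 : Mor Y P)
      (p1 : Mor P X) (p2 : Mor P Y),
      [/\ tcomp p1 i1 = idm X, tcomp p2 i2 = idm Y, tcomp p1 i2 = 0, tcomp p2 i1 = 0
        & tcomp i1 p1 + tcomp i2 p2 = idm P];
  shift : Obj -> Obj;
  shiftm : forall X Y, Mor X Y -> Mor (shift X) (shift Y);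
  shiftm1 : forall X, shiftm (idm X) = idm (shift X);
  shiftmM : forall X Y Z (g : Mor Y Z) (f : Mor X Y),
      shiftm (tcomp g f) = tcomp (shiftm g) (shiftm f);
  shiftmD : forall X Y (f g : Mor X Y), shiftm (f + g) = shiftm f + shiftm g;
  shiftm_bij : forall X Y, bijective (@shiftm X Y);
  shift_esurj : forall Y, exists X, exists (i : Mor (shift X) Y) (j : Mor Y (shift X)),
      tcomp i j = idm Y /\ tcomp j i = idm (shift X);
  dist : forall X Y Z, Mor X Y -> Mor Y Z -> Mor Z (shift X) -> Prop;
  dist_iso : forall X Y Z X' Y' Z' (f : Mor X Y) (g : Mor Y Z) (h : Mor Z (shift X))
      (f' : Mor X' Y') (g' : Mor Y' Z') (h' : Mor Z' (shift X'))
      (a : Mor X X') (b : Mor Y Y') (c : Mor Z Z')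
      (a' : Mor X' X) (b' : Mor Y' Y) (c' : Mor Z' Z),
      tcomp a' a = idm X -> tcomp a a' = idm X' ->
      tcomp b' b = idm Y -> tcomp b b' = idm Y' ->
      tcomp c' c = idm Z -> tcomp c c' = idm Z' ->
      tcomp b f = tcomp f' a -> tcomp c g = tcomp g' b ->
      tcomp (shiftm a) h = tcomp h' c ->
      dist f g h -> dist f' g' h';
  dist_id : forall X, dist (idm X) (0 : Mor X zobj) (0 : Mor zobj (shift X));
  dist_ex : forall X Y (f : Mor X Y), exists Z, exists (g : Mor Y Z) (h : Mor Z (shift X)),
      dist f g h;
  dist_rot : forall X Y Z (f : Mor X Y) (g : Mor Y Z) (h : Mor Z (shift X)),
      dist f g h -> dist g h (- shiftm f);
  dist_morph : forall X Y Z X' Y' Z' (f : Mor X Y) (g : Mor Y Z) (h : Mor Z (shift X))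
      (f' : Mor X' Y') (g' : Mor Y' Z') (h' : Mor Z' (shift X'))
      (a : Mor X X') (b : Mor Y Y'),
      dist f g h -> dist f' g' h' -> tcomp b f = tcomp f' a ->
      exists c : Mor Z Z', tcomp c g = tcomp g' b /\ tcomp (shiftm a) h = tcomp h' c;
  dist_oct : forall X Y Z Z' X' Y' (f : Mor X Y) (g : Mor Y Z)
      (f1 : Mor Y Z') (f2 : Mor Z' (shift X))
      (g1 : Mor Z X') (g2 : Mor X' (shift Y))
      (h1 : Mor Z Y') (h2 : Mor Y' (shift X)),
      dist f f1 f2 -> dist g g1 g2 -> dist (tcomp g f) h1 h2 ->
      exists (u : Mor Z' Y') (v : Mor Y' X'),
      [/\ dist u v (tcomp (shiftm f1) g2), tcomp u f1 = tcomp h1 g,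
          tcomp h2 u = f2, tcomp v h1 = g1 & tcomp g2 v = tcomp (shiftm f) h2]
}.

Arguments tcomp {_ _ _ _}.
Arguments idm {_}.
Arguments shift {_}.
Arguments shiftm {_ _ _}.
Arguments dist {_ _ _ _}.

Definition has_small_coproducts (D : TriCat) : Prop :=
  forall (I : Type) (F : I -> D), exists C : D, exists inj : forall i, Mor (F i) C,
    forall Y : D, bijective (fun u : Mor C Y => fun i => tcomp u (inj i)).

Definition shiftn (D : TriCat) (n : nat) (X : D) : D := iter n (@shift D) X.

(** "Mor(X, Y[k]) = 0" for k : int.  For k = -(n+1) < 0 we use the
    canonical identification Mor(X, Y[k]) ~ Mor(X[n+1], Y) (shift is an
    auto-equivalence). *)
Definition homZ_vanishes (D : TriCat) (X Y : D) (k : int) : Prop :=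
  match k with
  | Posz n => forall f : Mor X (shiftn n Y), f = 0
  | Negz n => forall f : Mor (shiftn n.+1 X) Y, f = 0
  end.

Definition exceptional (D : TriCat) (T : D) : Prop :=
  forall k : int, k != 0 -> homZ_vanishes T T k.

(* Apply Hom(T_i, -) and Hom(-, T_i[k]) to the triangle T1 -> T -> T2 -> T1[1].
   For k outside {0, 1} all four groups Hom(T_i, T_j[k]) vanish, so
   Hom(T, T[k]) = 0 by two-out-of-three in the exact sequences.  In degree 1
   only Hom(T2, T1[1]) survives, and a map T -> T[1] is the composite
   T -> T2 -> T1[1] -> T[1] of gamma, some phi and beta[1]; it vanishes for
   every phi exactly when each phi is of the form alpha f + g[1] alpha, since
   beta[1] kills alpha on the left and gamma kills alpha on the right. *)
From HB Require Import structures.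
From mathcomp Require Import all_boot all_order all_algebra.
Import GRing.Theory.
Local Open Scope ring_scope.
Set Implicit Arguments. Unset Strict Implicit.

Lemma morph_add0 (U V : zmodType) (f : U -> V) :
  {morph f : x y / x + y} -> f 0 = 0.
Proof. by move=> fD; apply: (addrI (f 0)); rewrite -fD !addr0. Qed.

Lemma morph_addN (U V : zmodType) (f : U -> V) :
  {morph f : x y / x + y} -> {morph f : x / - x}.
Proof.
by move=> fD x; apply: (addrI (f x)); rewrite -fD !subrr (morph_add0 fD).
Qed.

Section AdditiveCalculus.
Variable D : TriCat.

Lemma compm0 (X Y Z : D) (g : Mor Y Z) : tcomp g (0 : Mor X Y) = 0.
Proof. exact: morph_add0 (compDr g). Qed.

Lemma comp0m (X Y Z : D) (f : Mor X Y) : tcomp (0 : Mor Y Z) f = 0.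
Proof. exact: morph_add0 (fun g g' => compDl g g' f). Qed.

Lemma compmN (X Y Z : D) (g : Mor Y Z) (f : Mor X Y) :
  tcomp g (- f) = - tcomp g f.
Proof. exact: (morph_addN (compDr g)). Qed.

Lemma compNm (X Y Z : D) (g : Mor Y Z) (f : Mor X Y) :
  tcomp (- g) f = - tcomp g f.
Proof. exact: (morph_addN (fun g g' => compDl g g' f)). Qed.

Lemma shiftmN (X Y : D) (f : Mor X Y) : shiftm (- f) = - shiftm f.
Proof. exact: (morph_addN (@shiftmD D X Y)). Qed.

Lemma shiftm_inj (X Y : D) : injective (@shiftm D X Y).
Proof. exact: bij_inj (shiftm_bij X Y). Qed.

Lemma shiftm_surj (X Y : D) (v : Mor (shift X) (shift Y)) :
  exists u, shiftm u = v.
Proof. by case: (shiftm_bij X Y) => g _ gK; exists (g v). Qed.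

End AdditiveCalculus.

Definition hom_vanishes (D : TriCat) (A B : D) : Prop := forall u : Mor A B, u = 0.

Section DistinguishedTriangles.
Variables (D : TriCat) (X Y Z : D).
Variables (f : Mor X Y) (g : Mor Y Z) (h : Mor Z (shift X)).
Hypothesis fgh : dist f g h.

Lemma dist_comp0 : tcomp g f = 0.
Proof.
have [c [cE _]] := dist_morph (dist_id X) fgh (a := idm X) (b := f) erefl.
by rewrite -cE compm0.
Qed.

Lemma dist_factor_fst (W : D) (u : Mor W Y) :
  tcomp g u = 0 -> exists v, tcomp f v = u.
Proof.
move=> gu0.
have [|c [_ cE]] := dist_morph (dist_rot (dist_id W)) (dist_rot fgh)
  (a := u) (b := 0 : Mor (zobj D) Z); first by rewrite compm0 gu0.
have [v vE] := shiftm_surj c.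
exists v; apply: shiftm_inj; rewrite shiftmM vE.
by move: cE; rewrite shiftm1 compmN compm1 compNm => /oppr_inj ->.
Qed.

Lemma dist_factor_snd (W : D) (u : Mor Y W) :
  tcomp u f = 0 -> exists v, tcomp v g = u.
Proof.
move=> uf0.
(* W need not be a shift, so we replace it by an isomorphic W'[1] to rotate
   the trivial triangle on W' twice. *)
have [W' [i [j [ij _]]]] := shift_esurj W.
have [|c [cE _]] := dist_morph fgh (dist_rot (dist_rot (dist_id W')))
  (a := 0 : Mor X (zobj D)) (b := tcomp j u); first by rewrite -tcompA uf0 !compm0.
exists (tcomp i (- c)).
by rewrite -tcompA compNm cE shiftm1 compNm comp1m opprK tcompA ij comp1m.
Qed.

Lemma dist_shiftn n : exists (f' : Mor (shiftn n X) (shiftn n Y))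
  (g' : Mor (shiftn n Y) (shiftn n Z))
  (h' : Mor (shiftn n Z) (shift (shiftn n X))), dist f' g' h'.
Proof.
elim: n => [|n [f' [g' [h' fgh']]]]; first by exists f, g, h.
exists (- shiftm f'), (- shiftm g'), (- shiftm h').
exact: dist_rot (dist_rot (dist_rot fgh')).
Qed.

Lemma dist_hom_vanishes_to {W : D} :
  hom_vanishes W X -> hom_vanishes W Z -> hom_vanishes W Y.
Proof.
move=> WX0 WZ0 u; have [v <-] := dist_factor_fst (WZ0 (tcomp g u)).
by rewrite (WX0 v) compm0.
Qed.

Lemma dist_hom_vanishes_from {W : D} :
  hom_vanishes X W -> hom_vanishes Z W -> hom_vanishes Y W.
Proof.
move=> XW0 ZW0 u; have [v <-] := dist_factor_snd (XW0 (tcomp u f)).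
by rewrite (ZW0 v) comp0m.
Qed.

End DistinguishedTriangles.

Section ExtensionOfTwoObjects.
Variables (D : TriCat) (T1 T T2 : D).
Variables (beta : Mor T1 T) (gamma : Mor T T2) (alpha : Mor T2 (shift T1)).
Hypothesis htri : dist beta gamma alpha.

Let rot1 := dist_rot htri.
Let rot2 := dist_rot rot1.
Let rot3 := dist_rot rot2.

Definition alpha_action_surjective : Prop :=
  forall phi : Mor T2 (shift T1), exists (f : Mor T2 T2) (g : Mor T1 T1),
    tcomp alpha f + tcomp (shiftm g) alpha = phi.

Lemma alpha_action_surjective_of_vanishing :
  hom_vanishes T1 T2 -> hom_vanishes T (shift T) -> alpha_action_surjective.
Proof.
move=> T12 TT1 phi.
have [v vE] := dist_factor_snd rot1 (TT1 (tcomp (tcomp (- shiftm beta) phi) gamma)).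
have [v0 v0E] := shiftm_surj v; subst v.
have [g gE] := dist_factor_fst htri (T12 (tcomp gamma v0)).
have [|f fE] := dist_factor_fst rot2 (u := phi + tcomp (shiftm g) alpha).
  by rewrite compDr -vE -gE shiftmM compNm tcompA subrr.
by exists f, (- g); rewrite fE shiftmN compNm addrK.
Qed.

Lemma hom_shift_vanishes_of_surjective :
  hom_vanishes T1 (shift T1) -> hom_vanishes T1 (shift T2) ->
  hom_vanishes T2 (shift T2) -> alpha_action_surjective ->
  hom_vanishes T (shift T).
Proof.
move=> T11 T12 T22 hsurj u.
have T1T : hom_vanishes T1 (shift T) := dist_hom_vanishes_to rot3 T11 T12.
have [w <-] := dist_factor_snd htri (T1T (tcomp u beta)).
have [phi <-] := dist_factor_fst rot3 (T22 (tcomp (- shiftm gamma) w)).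
have [f [g <-]] := hsurj phi.
have betaalpha : tcomp (- shiftm beta) alpha = 0 := dist_comp0 rot2.
have alphagamma : tcomp alpha gamma = 0 := dist_comp0 rot1.
rewrite compDr compDl (tcompA _ alpha f) betaalpha comp0m comp0m add0r.
by rewrite -!tcompA alphagamma !compm0.
Qed.

Lemma homZ_vanishes_dist (k : int) :
  homZ_vanishes T1 T1 k -> homZ_vanishes T1 T2 k ->
  homZ_vanishes T2 T1 k -> homZ_vanishes T2 T2 k -> homZ_vanishes T T k.
Proof.
case: k => n T11 T12 T21 T22.
- have [f' [g' [h' tri_n]]] := dist_shiftn htri n.
  apply: (dist_hom_vanishes_from htri).
  + exact: (dist_hom_vanishes_to tri_n T11 T12).
  + exact: (dist_hom_vanishes_to tri_n T21 T22).
- have [f' [g' [h' tri_n]]] := dist_shiftn htri n.+1.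
  apply: (dist_hom_vanishes_from tri_n).
  + exact: (dist_hom_vanishes_to htri T11 T12).
  + exact: (dist_hom_vanishes_to htri T21 T22).
Qed.

End ExtensionOfTwoObjects.

Theorem proposition2p1 (D : TriCat) (hcop : has_small_coproducts D)
  (T1 T2 : D) (hT1 : exceptional T1) (hT2 : exceptional T2)
  (A1 : forall k : int, homZ_vanishes T1 T2 k)
  (A2 : forall k : int, k != 0 -> k != 1 -> homZ_vanishes T2 T1 k)
  (alpha : Mor T2 (shift T1)) (T : D) (beta : Mor T1 T) (gamma : Mor T T2)
  (htri : dist beta gamma alpha) :
  exceptional T <->
  (forall phi : Mor T2 (shift T1), exists (f : Mor T2 T2) (g : Mor T1 T1),
      tcomp alpha f + tcomp (shiftm g) alpha = phi).
Proof.
split=> [hT | hsurj k k_neq0].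
  exact: alpha_action_surjective_of_vanishing htri (A1 0) (hT 1 isT).
have [-> | k_neq1] := eqVneq k 1.
  exact: hom_shift_vanishes_of_surjective htri (hT1 1 isT) (A1 1) (hT2 1 isT) hsurj.
exact: (homZ_vanishes_dist htri (hT1 k k_neq0) (A1 k) (A2 k k_neq0 k_neq1) (hT2 k k_neq0)).
Qed.
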